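(* Let $\mathbf{NeurRing}$ be the category whose objects are neural rings and whose morphisms are monomial maps, and let $\mathbf{Code}$ be the category of codes with morphisms of codes. The assignment $R$ sending a code $\mathcal{C}$ to its neural ring $R_{\mathcal{C}}$, and a morphism $f:\mathcal{C}\to\mathcal{D}$ to the ring homomorphism $f^*:R_{\mathcal{D}}\to R_{\mathcal{C}}$, $f^*(p)=p\circ f$ (regarding elements of neural rings as functions on codewords), is a contravariant equivalence of categories $\mathbf{Code}\to\mathbf{NeurRing}$.
   Context: A code is a subset $\mathcal{C}\subseteq 2^{[n]}$; in $\mathbf{Code}$, two codes that are equal as sets of subsets (e.g. $\mathcal{C}\subseteq 2^{[n]}$ regarded also as a subset of $2^{[m]}$, $m\ge n$) are the same object. For $\sigma\subseteq[n]$, $\mathrm{Tk}_{\mathcal{C}}(\sigma)=\{c\in\mathcal{C}\mid\sigma\subseteq c\}$; a trunk in $\mathcal{C}$ is a subset that is empty or of this form. A morphism of codes $f:\mathcal{C}\to\mathcal{D}$ is a function such that preimages of trunks in $\mathcal{D}$ are trunks in $\mathcal{C}$. A polynomial $p\in\mathbb{F}_2[x_1,\dots,x_n]$ defines a function $2^{[n]}\to\mathbb{F}_2$ by setting $x_i=1$ if $i\in c$ and $x_i=0$ otherwise. The vanishing ideal of $\mathcal{C}\subseteq 2^{[n]}$ is $I_{\mathcal{C}}=\{p\in\mathbb{F}_2[x_1,\dots,x_n]\mid p(c)=0\ \forall c\in\mathcal{C}\}$, and the neural ring is $R_{\mathcal{C}}=\mathbb{F}_2[x_1,\dots,x_n]/I_{\mathcal{C}}$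 together with its coordinate functions $x_1,\dots,x_n$; it is identified with the ring of functions $\mathcal{C}\to\mathbb{F}_2$. If $R_{\mathcal{C}}$, $R_{\mathcal{D}}$ have coordinates $x_1,\dots,x_n$ and $y_1,\dots,y_m$, a monomial map $R_{\mathcal{C}}\to R_{\mathcal{D}}$ is a ring homomorphism $\phi$ such that for every monomial $p$ in the $x_i$, $\phi(p)$ is either $0$ or a monomial in the $y_j$. *)

From HB Require Import structures.
From mathcomp Require Import all_boot all_order all_algebra.
Set Implicit Arguments. Unset Strict Implicit. Unset Printing Implicit Defensive.
Import GRing.Theory.
Local Open Scope ring_scope.

Definition code (n : nat) := {set {set 'I_n}}.

Definition word (n : nat) (C : code n) := {c : {set 'I_n} | c \in C}.

(* The neural ring R_C, identified with the ring of F_2-valued functions on C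
   (pointwise operations). *)
Definition NR (n : nat) (C : code n) := {ffun word C -> 'F_2}.

Definition Tk (n : nat) (C : code n) (sigma : {set 'I_n}) : {set word C} :=
  [set c : word C | sigma \subset val c].

Definition is_trunk (n : nat) (C : code n) (T : {set word C}) : Prop :=
  T = set0 \/ exists sigma : {set 'I_n}, T = Tk C sigma.

Definition code_morphism (n m : nat) (C : code n) (D : code m)
  (f : word C -> word D) : Prop :=
  forall T : {set word D}, is_trunk T -> is_trunk (f @^-1: T).

(* The monomial x^sigma = prod_{i in sigma} x_i, as a function on codewords
   (x_i^2 = x_i on codewords, so every monomial is of this form). *)
Definition mono (n : nat) (C : code n) (sigma : {set 'I_n}) : NR C :=
  [ffun c : word C => ((sigma \subset val c) : nat)%:R].

Definition ring_hom (n m : nat) (C : code n) (D : code m)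
  (phi : NR C -> NR D) : Prop :=
  (forall a b, phi (a + b) = phi a + phi b) /\
  (forall a b, phi (a * b) = phi a * phi b) /\
  phi 1 = 1.

Definition monomial_map (n m : nat) (C : code n) (D : code m)
  (phi : NR C -> NR D) : Prop :=
  ring_hom phi /\
  forall sigma : {set 'I_n},
    phi (mono C sigma) = 0 \/ exists tau : {set 'I_m}, phi (mono C sigma) = mono D tau.

Definition pullback (n m : nat) (C : code n) (D : code m)
  (f : word C -> word D) : NR D -> NR C :=
  fun p => [ffun c => p (f c)].

(** A code morphism pulls the indicator of a trunk back to the indicator of its
    preimage, and indicators of trunks are exactly the monomials (and 0 is the
    indicator of the empty trunk); so [f] is a code morphism iff [f^*] is a
    monomial map. Conversely a ring homomorphism [phi : R_D -> R_C] sends the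
    partition of unity [1 = sum_d e_d] by point indicators to a partition of
    unity, so for each codeword [c] some [phi e_d] is 1 at [c]; calling
    that [d] [f c], the idempotent relation [p e_d = p(d) e_d] gives
    [phi = f^*]. Faithfulness is evaluation on point indicators, and every
    neural ring is [R_C] for a code [C]. *)

From HB Require Import structures.
From mathcomp Require Import all_boot all_order all_algebra.
From Stdlib Require Import FunctionalExtensionality.
Set Implicit Arguments. Unset Strict Implicit. Unset Printing Implicit Defensive.
Import GRing.Theory.
Local Open Scope ring_scope.

Lemma F2_eq01 (x : 'F_2) : x = 0 \/ x = 1.
Proof. by case: x => [[|[|k]] Hk]; [left | right | by []]; apply: val_inj. Qed.

Lemma F2_natr_bool_inj (b1 b2 : bool) :
  ((b1 : nat)%:R : 'F_2) = (b2 : nat)%:R -> b1 = b2.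
Proof. by case: b1; case: b2. Qed.

Section Indicators.

Variables (n : nat) (C : code n).

Definition indicator (A : {set word C}) : NR C := [ffun c => ((c \in A) : nat)%:R].

Definition point_fun (d : word C) : NR C := indicator [set d].

Lemma indicator_inj (A B : {set word C}) : indicator A = indicator B -> A = B.
Proof.
move=> eqAB; apply/setP => c.
by apply: F2_natr_bool_inj; have := congr1 (fun q : NR C => q c) eqAB; rewrite !ffunE.
Qed.

Lemma indicator0 : indicator set0 = 0.
Proof. by apply/ffunP => c; rewrite !ffunE inE. Qed.

Lemma mono_indicator (sigma : {set 'I_n}) : mono C sigma = indicator (Tk C sigma).
Proof. by apply/ffunP => c; rewrite !ffunE inE. Qed.

Lemma is_trunk_indicator (A : {set word C}) :
  is_trunk A <-> indicator A = 0 \/ exists tau, indicator A = mono C tau.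
Proof.
rewrite -indicator0; split.
- by case=> [-> | [tau ->]]; [left | right; exists tau; rewrite mono_indicator].
- case=> [/indicator_inj -> | [tau]]; first by left.
  by rewrite mono_indicator => /indicator_inj ->; right; exists tau.
Qed.

Lemma sum_point_fun : \sum_d point_fun d = 1.
Proof.
apply/ffunP => c; rewrite sum_ffunE (bigD1 c) //= big1 => [|d ne_dc].
  by rewrite !ffunE inE eqxx addr0.
by rewrite ffunE inE eq_sym (negbTE ne_dc).
Qed.

Lemma mul_point_fun (p : NR C) (d : word C) :
  p * point_fun d = if p d == 1 then point_fun d else 0.
Proof.
apply/ffunP => c.
have [-> | ne_cd] := eqVneq c d; last by case: ifP; rewrite !ffunE inE (negbTE ne_cd) mulr0.
rewrite [LHS]ffunE; case: (F2_eq01 (p d)) => ->; rewrite ?ffunE ?inE eqxx ?mul0r ?mul1r //=.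
Qed.

End Indicators.

Section Pullback.

Variables (n m : nat) (C : code n) (D : code m).

Lemma pullback_ring_hom (f : word C -> word D) : ring_hom (pullback f).
Proof. by do !split; move=> *; apply/ffunP => c; rewrite !ffunE. Qed.

Lemma pullback_indicator (f : word C -> word D) (A : {set word D}) :
  pullback f (indicator A) = indicator (f @^-1: A).
Proof. by apply/ffunP => c; rewrite !ffunE inE. Qed.

Lemma code_morphismP (f : word C -> word D) :
  code_morphism f <-> monomial_map (pullback f).
Proof.
split=> [mor_f | [_ mono_f] T [-> | [sigma ->]]].
- split; first exact: pullback_ring_hom.
  move=> sigma; rewrite mono_indicator pullback_indicator.
  by apply/is_trunk_indicator/mor_f; right; exists sigma.
- by left; apply/setP => c; rewrite !inE.
- by apply/is_trunk_indicator; rewrite -pullback_indicator -mono_indicator.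
Qed.

Lemma pullback_inj (f g : word C -> word D) :
  (forall p, pullback f p = pullback g p) -> f = g.
Proof.
move=> eq_fg; apply: functional_extensionality => c.
have := congr1 (fun q : NR C => q c) (eq_fg (point_fun (g c))).
by rewrite !ffunE !inE eqxx; case: eqP.
Qed.

Section RingHom.

Variables (phi : NR D -> NR C) (phi_hom : ring_hom phi).

Lemma ring_hom0 : phi 0 = 0.
Proof.
case: phi_hom => phiD _; apply: (@addrI _ (phi 0)).
by rewrite -phiD !addr0.
Qed.

Lemma ring_hom_point_fun_cover (c : word C) :
  exists d, phi (point_fun d) c == 1.
Proof.
case: phi_hom => phiD [_ phi1].
have sum1 : \sum_d phi (point_fun d) c = 1.
  by rewrite -sum_ffunE -(big_morph phi phiD ring_hom0) sum_point_fun phi1 ffunE.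
case: (pickP (fun d => phi (point_fun d) c == 1)) => [d ? | none]; first by exists d.
move: sum1; rewrite big1 // => d _.
by case: (F2_eq01 (phi (point_fun d) c)) => // eq1; move: (none d); rewrite eq1 eqxx.
Qed.

Definition ring_hom_fun (c : word C) : word D := xchoose (ring_hom_point_fun_cover c).

Lemma ring_hom_fun_spec (c : word C) : phi (point_fun (ring_hom_fun c)) c = 1.
Proof. exact/eqP/(xchooseP (ring_hom_point_fun_cover c)). Qed.

Lemma ring_hom_pullback (p : NR D) : phi p = pullback ring_hom_fun p.
Proof.
case: phi_hom => _ [phiM _].
apply/ffunP => c; rewrite [RHS]ffunE; set d := ring_hom_fun c.
have -> : phi p c = phi (p * point_fun d) c.
  by rewrite phiM ffunE ring_hom_fun_spec mulr1.
rewrite mul_point_fun.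
by case: (F2_eq01 (p d)) => ->; rewrite ?ring_hom0 ?ffunE ?ring_hom_fun_spec.
Qed.

End RingHom.

Lemma monomial_map_is_pullback (phi : NR D -> NR C) :
  monomial_map phi -> exists f, code_morphism f /\ forall p, phi p = pullback f p.
Proof.
move=> mono_phi; have [phi_hom _] := mono_phi.
have eq_phi := ring_hom_pullback phi_hom.
exists (ring_hom_fun phi_hom); split=> //.
apply/code_morphismP; suff -> : pullback (ring_hom_fun phi_hom) = phi by [].
by apply: functional_extensionality => p; rewrite eq_phi.
Qed.

End Pullback.

Lemma id_monomial_map (n : nat) (C : code n) : monomial_map (@id (NR C)).
Proof. by split=> [|sigma]; [do !split | right; exists sigma]. Qed.

Theorem theorem1p4 :
  (forall (n m : nat) (C : code n) (D : code m) (f : word C -> word D),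
      code_morphism f -> monomial_map (pullback f)) /\
  (forall (n : nat) (C : code n) (p : NR C), pullback (@id (word C)) p = p) /\
  (forall (n m k : nat) (C : code n) (D : code m) (E : code k)
          (f : word C -> word D) (g : word D -> word E) (p : NR E),
      pullback (fun c => g (f c)) p = pullback f (pullback g p)) /\
  (forall (n m : nat) (C : code n) (D : code m) (f g : word C -> word D),
      code_morphism f -> code_morphism g ->
      (forall p : NR D, pullback f p = pullback g p) -> f = g) /\
  (forall (n m : nat) (C : code n) (D : code m) (phi : NR D -> NR C),
      monomial_map phi ->
      exists f : word C -> word D,
        code_morphism f /\ forall p : NR D, phi p = pullback f p) /\
  (forall (m : nat) (D : code m),
      exists (n : nat) (C : code n) (phi : NR C -> NR D) (psi : NR D -> NR C),
        monomial_map phi /\ monomial_map psi /\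
        (forall p, psi (phi p) = p) /\ (forall q, phi (psi q) = q)).
Proof.
split; first by move=> n m C D f /code_morphismP.
split; first by move=> n C p; apply/ffunP => c; rewrite ffunE.
split; first by move=> *; apply/ffunP => c; rewrite !ffunE.
split; first by move=> n m C D f g _ _; apply: pullback_inj.
split; first exact: monomial_map_is_pullback.
move=> m D; exists m, D, id, id.
by split; [|split]; [exact: id_monomial_map | exact: id_monomial_map | ].
Qed.
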